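(* Let $(X,d)$ be a complete metric space and let $T:X\to X$ satisfy, for all $x,y\in X$ with $Tx\neq Ty$, $F(d(Tx,Ty))\le E(d(x,y))$, where $F,E:(0,\infty)\to\mathbb{R}$ satisfy: $(p_1)$ $F$ is nondecreasing; $(p_2)$ $E(t)<F(t)$ for every $t>0$; $(p_3)$ for every $\varepsilon>0$ and every sequence $(t_n)\subset(\varepsilon,\infty)$ with $t_n\to\varepsilon$, $\liminf_{n\to\infty}E(t_n)<F(\varepsilon^+)$, where $F(\varepsilon^+)=\lim_{s\to\varepsilon^+}F(s)$. Then $T$ is a CJMP-contraction, and hence a Picard operator.
   Context: $T$ is contractive if $d(Tx,Ty)<d(x,y)$ for all $x\neq y$. $T$ is a CJMP-contraction if it is contractive and for every $\varepsilon>0$ there exists $\delta>0$ such that for all $x,y\in X$, $\varepsilon<d(x,y)<\varepsilon+\delta$ implies $d(Tx,Ty)\le\varepsilon$. $T$ is a Picard operator if $T$ has a unique fixed point $u\in X$ and for every $x\in X$ the sequence $(T^nx)_{n\in\mathbb{N}}$ converges to $u$. *)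

From Stdlib Require Import Reals.
From Coquelicot Require Import Coquelicot.
Open Scope R_scope.

Definition is_metric {X : Type} (d : X -> X -> R) : Prop :=
  (forall x y, 0 <= d x y) /\
  (forall x y, d x y = 0 <-> x = y) /\
  (forall x y, d x y = d y x) /\
  (forall x y z, d x z <= d x y + d y z).

Definition cauchy_seq {X : Type} (d : X -> X -> R) (u : nat -> X) : Prop :=
  forall eps, 0 < eps -> exists N, forall m n, (N <= m)%nat -> (N <= n)%nat ->
    d (u m) (u n) < eps.

Definition seq_converges_to {X : Type} (d : X -> X -> R) (u : nat -> X) (l : X) : Prop :=
  forall eps, 0 < eps -> exists N, forall n, (N <= n)%nat -> d (u n) l < eps.

Definition complete_metric {X : Type} (d : X -> X -> R) : Prop :=
  forall u, cauchy_seq d u -> exists l, seq_converges_to d u l.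

Definition contractive {X : Type} (d : X -> X -> R) (T : X -> X) : Prop :=
  forall x y, x <> y -> d (T x) (T y) < d x y.

Definition CJMP_contraction {X : Type} (d : X -> X -> R) (T : X -> X) : Prop :=
  contractive d T /\
  forall eps, 0 < eps -> exists delta, 0 < delta /\
    forall x y, eps < d x y -> d x y < eps + delta -> d (T x) (T y) <= eps.

Definition Picard_operator {X : Type} (d : X -> X -> R) (T : X -> X) : Prop :=
  exists u, T u = u /\ (forall v, T v = v -> v = u) /\
    forall x, seq_converges_to d (fun n => Nat.iter n T x) u.

(** Under (p1)-(p3), T is contractive, and if the CJMP condition failed at some
    eps > 0 there would be pairs (x_n, y_n) with d(x_n, y_n) decreasing to eps
    from above and d(T x_n, T y_n) > eps; then E(d(x_n, y_n)) >= F(d(T x_n, T y_n))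
    >= F(eps+) for all n, contradicting (p3).  A CJMP contraction is Picard by
    the Meir-Keeler argument: the successive distances of an orbit decrease to 0,
    which together with the uniform form of the CJMP condition makes every orbit
    Cauchy; its limit is a fixed point, unique by contractivity. *)

From Stdlib Require Import Reals Lra Lia Classical ClassicalEpsilon.
From Coquelicot Require Import Coquelicot.
Open Scope R_scope.

Lemma Rinf_exists (P : R -> Prop) (m : R) :
  (forall y, P y -> m <= y) -> (exists y, P y) ->
  exists L, (forall y, P y -> L <= y) /\
    (forall r, 0 < r -> exists y, P y /\ y < L + r).
Proof.
  intros Hm [y0 Hy0].
  destruct (completeness (fun z => P (- z))) as [l [Hub Hlub]].
  - exists (- m). intros z Hz. specialize (Hm _ Hz). lra.
  - exists (- y0). now rewrite Ropp_involutive.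
  - exists (- l). split.
    + intros y Hy. assert (- y <= l) by (apply Hub; now rewrite Ropp_involutive).
      lra.
    + intros r Hr. apply NNPP. intros Hno.
      assert (l <= l - r); [|lra].
      apply Hlub. intros z Hz. apply Rnot_lt_le. intros Hlt.
      apply Hno. exists (- z). split; [exact Hz | lra].
Qed.

Lemma nondecreasing_right_limit (F : R -> R) (a : R) :
  (forall s t, a <= s -> s <= t -> F s <= F t) ->
  exists L, filterlim F (at_right a) (locally L) /\ forall s, a < s -> L <= F s.
Proof.
  intros HF.
  destruct (Rinf_exists (fun y => exists s, a < s /\ y = F s) (F a))
    as [L [HLle HLapprox]].
  - intros y [s [Hs ->]]. apply HF; lra.
  - exists (F (a + 1)), (a + 1). split; [lra | reflexivity].
  - exists L. split; [|intros s Hs; apply HLle; eauto].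
    intros P [r HP]. destruct (HLapprox r (cond_pos r)) as [y [[s0 [Hs0 ->]] Hy]].
    assert (Hs0a : 0 < s0 - a) by lra.
    exists (mkposreal _ Hs0a). intros s Hs Has. apply HP.
    change (Rabs (s - a) < s0 - a) in Hs. apply Rabs_lt_between in Hs.
    change (Rabs (F s - L) < r). apply Rabs_lt_between.
    assert (L <= F s) by (apply HLle; eauto).
    assert (F s <= F s0) by (apply HF; lra).
    lra.
Qed.

Lemma is_lim_seq_right_inv (t : nat -> R) (a : R) :
  (forall n, a < t n < a + / INR (S n)) -> is_lim_seq t a.
Proof.
  intros Ht.
  apply is_lim_seq_le_le with (u := fun _ => a) (w := fun n => a + / INR (S n)).
  - intros n. specialize (Ht n). lra.
  - apply is_lim_seq_const.
  - apply (is_lim_seq_incr_1 (fun n => a + / INR n)).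
    replace (Finite a) with (Finite (a + 0)) by (f_equal; ring).
    apply is_lim_seq_plus'; [apply is_lim_seq_const|].
    apply (is_lim_seq_inv INR p_infty); [apply is_lim_seq_INR | discriminate].
Qed.

Section Metric.

Context {X : Type} (d : X -> X -> R) (Hd : is_metric d).

Lemma dist_refl x : d x x = 0.
Proof. now apply Hd. Qed.

Lemma dist_pos x y : x <> y -> 0 < d x y.
Proof.
  destruct Hd as (Hge & Hzero & _). intros Hxy.
  destruct (Rle_lt_or_eq_dec _ _ (Hge x y)) as [H|H]; [exact H|].
  now contradiction Hxy; apply Hzero.
Qed.

Lemma seq_converges_to_unique u l l' :
  seq_converges_to d u l -> seq_converges_to d u l' -> l = l'.
Proof.
  destruct Hd as (_ & _ & Hsym & Htri). intros Hl Hl'.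
  apply NNPP. intros Hne. pose (r := d l l' / 2).
  assert (Hr : 0 < r) by (pose proof (dist_pos l l' Hne); unfold r; lra).
  destruct (Hl r Hr) as [N HN], (Hl' r Hr) as [N' HN'].
  specialize (HN (N + N')%nat ltac:(lia)). specialize (HN' (N + N')%nat ltac:(lia)).
  pose proof (Htri l (u (N + N')%nat) l') as Htri'.
  rewrite (Hsym l (u _)) in Htri'. unfold r in *. lra.
Qed.

End Metric.

Section Contractive.

Context {X : Type} (d : X -> X -> R) (T : X -> X) (Hd : is_metric d)
  (Hc : contractive d T).

Lemma contractive_nonexpansive x y : d (T x) (T y) <= d x y.
Proof.
  destruct (classic (x = y)) as [<-|Hxy].
  - rewrite !(dist_refl d Hd). lra.
  - left. now apply Hc.
Qed.

Lemma contractive_fixpoint_unique u v : T u = u -> T v = v -> u = v.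
Proof.
  intros Hu Hv. apply NNPP. intros Hne.
  pose proof (Hc u v Hne) as Hlt. rewrite Hu, Hv in Hlt. lra.
Qed.

Definition orbit x n := Nat.iter n T x.

Lemma orbit_S x n : orbit x (S n) = T (orbit x n).
Proof. reflexivity. Qed.

Lemma orbit_limit_fixpoint x l : seq_converges_to d (orbit x) l -> T l = l.
Proof.
  intros Hl. apply (seq_converges_to_unique d Hd (fun n => orbit x (S n))).
  - intros eps Heps. destruct (Hl eps Heps) as [N HN]. exists N. intros n Hn.
    pose proof (contractive_nonexpansive (orbit x n) l). specialize (HN n Hn).
    rewrite orbit_S. lra.
  - intros eps Heps. destruct (Hl eps Heps) as [N HN]. exists N. intros n Hn.
    apply HN. lia.
Qed.

Definition step x n := d (orbit x n) (orbit x (S n)).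

Lemma step_S_le x n : step x (S n) <= step x n.
Proof. apply contractive_nonexpansive. Qed.

Lemma step_S_lt x n : 0 < step x n -> step x (S n) < step x n.
Proof.
  intros Hpos.
  assert (Hne : orbit x n <> orbit x (S n)).
  { intros Heq. unfold step in Hpos. rewrite Heq, (dist_refl d Hd) in Hpos. lra. }
  exact (Hc _ _ Hne).
Qed.

Lemma step_le x m n : (m <= n)%nat -> step x n <= step x m.
Proof.
  induction 1; [lra|]. pose proof (step_S_le x m0). lra.
Qed.

End Contractive.

Section CJMP.

Context {X : Type} (d : X -> X -> R) (T : X -> X) (Hd : is_metric d)
  (HT : CJMP_contraction d T).

Let Hc : contractive d T := proj1 HT.

Lemma CJMP_uniform eps : 0 < eps ->
  exists delta, 0 < delta <= eps /\
    forall x y, d x y < eps + delta -> d (T x) (T y) <= eps.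
Proof.
  intros Heps. destruct (proj2 HT eps Heps) as [delta [Hdelta Hstep]].
  exists (Rmin delta eps). split.
  - split; [apply Rmin_pos; lra | apply Rmin_r].
  - intros x y Hxy. destruct (Rle_or_lt (d x y) eps) as [Hle|Hlt].
    + pose proof (contractive_nonexpansive d T Hd Hc x y). lra.
    + apply Hstep; [exact Hlt|]. pose proof (Rmin_l delta eps). lra.
Qed.

Lemma step_tends_to_0 x r : 0 < r -> exists N, forall n, (N <= n)%nat -> step d T x n < r.
Proof.
  intros Hr.
  destruct (Rinf_exists (fun y => exists n, y = step d T x n) 0) as [L [HLle HLapprox]].
  - intros y [n ->]. apply Hd.
  - exists (step d T x 0). eauto.
  - assert (HL0 : L <= 0).
    { apply Rnot_lt_le. intros HL.
      destruct (CJMP_uniform L HL) as [delta [[Hdelta _] Hsmall]].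
      destruct (HLapprox delta Hdelta) as [y [[N ->] HN]].
      (* the step after N falls to L > 0, so the next one falls below L *)
      assert (step d T x (S N) <= L) by (apply Hsmall; exact HN).
      assert (L <= step d T x (S N)) by eauto.
      assert (L <= step d T x (S (S N))) by eauto.
      pose proof (step_S_lt d T Hd Hc x (S N)). lra. }
    destruct (HLapprox r Hr) as [y [[N ->] HN]]. exists N. intros n Hn.
    pose proof (step_le d T Hd Hc x N n Hn). lra.
Qed.

Lemma orbit_cauchy x : cauchy_seq d (orbit T x).
Proof.
  destruct Hd as (_ & _ & Hsym & Htri).
  intros eps Heps. pose (e := eps / 4).
  destruct (CJMP_uniform e ltac:(unfold e; lra)) as [delta [[Hdelta Hde] Hsmall]].
  destruct (step_tends_to_0 x delta Hdelta) as [N HN].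
  assert (Hball : forall k, d (orbit T x N) (orbit T x (N + k)) < e + delta).
  { induction k as [|k IH].
    - rewrite Nat.add_0_r, (dist_refl d Hd). unfold e. lra.
    - replace (N + S k)%nat with (S (N + k)) by lia.
      pose proof (Htri (orbit T x N) (orbit T x (S N)) (orbit T x (S (N + k)))).
      assert (d (orbit T x (S N)) (orbit T x (S (N + k))) <= e)
        by (apply Hsmall; exact IH).
      specialize (HN N (le_n N)). unfold step in HN. lra. }
  exists N. intros m n Hm Hn.
  replace m with (N + (m - N))%nat by lia. replace n with (N + (n - N))%nat by lia.
  pose proof (Hball (m - N)%nat). pose proof (Hball (n - N)%nat).
  pose proof (Htri (orbit T x (N + (m - N))) (orbit T x N) (orbit T x (N + (n - N)))).
  rewrite (Hsym _ (orbit T x N)) in *. unfold e in *. lra.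
Qed.

Lemma CJMP_Picard (x0 : X) : complete_metric d -> Picard_operator d T.
Proof.
  intros Hcomplete.
  destruct (Hcomplete _ (orbit_cauchy x0)) as [u Hu].
  pose proof (orbit_limit_fixpoint d T Hd Hc x0 u Hu) as Hfix.
  exists u. split; [exact Hfix | split].
  - intros v Hv. exact (contractive_fixpoint_unique d T Hc v u Hv Hfix).
  - intros x. destruct (Hcomplete _ (orbit_cauchy x)) as [l Hl].
    rewrite (contractive_fixpoint_unique d T Hc u l Hfix
               (orbit_limit_fixpoint d T Hd Hc x l Hl)).
    exact Hl.
Qed.

End CJMP.

Definition FE_contraction {X : Type} (d : X -> X -> R) (T : X -> X) (F E : R -> R) :=
  forall x y, T x <> T y -> F (d (T x) (T y)) <= E (d x y).

Section FE_contraction.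

Context {X : Type} (d : X -> X -> R) (T : X -> X) (F E : R -> R)
  (Hd : is_metric d) (HT : FE_contraction d T F E)
  (p1 : forall s t, 0 < s -> s <= t -> F s <= F t)
  (p2 : forall t, 0 < t -> E t < F t).

Lemma FE_contraction_contractive : contractive d T.
Proof.
  intros x y Hxy. pose proof (dist_pos d Hd x y Hxy) as Hpos.
  destruct (classic (T x = T y)) as [Heq|Hne].
  - rewrite Heq, (dist_refl d Hd). exact Hpos.
  - apply Rnot_le_lt. intros Hle.
    pose proof (HT x y Hne). pose proof (p2 _ Hpos). pose proof (p1 _ _ Hpos Hle).
    lra.
Qed.

Lemma FE_contraction_CJMP :
  (forall eps, 0 < eps -> forall Fplus : R,
     filterlim F (at_right eps) (locally Fplus) ->
     forall t : nat -> R, (forall n, eps < t n) -> is_lim_seq t eps ->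
     Rbar_lt (LimInf_seq (fun n => E (t n))) Fplus) ->
  CJMP_contraction d T.
Proof.
  intros p3. split; [exact FE_contraction_contractive|].
  intros eps Heps. apply NNPP. intros Hno.
  assert (Hpairs : forall n, exists p : X * X,
    eps < d (fst p) (snd p) < eps + / INR (S n) /\ eps < d (T (fst p)) (T (snd p))).
  { intros n. apply NNPP. intros Hn. apply Hno. exists (/ INR (S n)). split.
    - apply Rinv_0_lt_compat, lt_0_INR. lia.
    - intros x y H1 H2. apply Rnot_lt_le. intros H3. apply Hn. exists (x, y). auto. }
  destruct (choice _ Hpairs) as [p Hp].
  destruct (nondecreasing_right_limit F eps) as [L [HL HLle]].
  { intros s t Hs Hst. apply p1; lra. }
  pose (t n := d (fst (p n)) (snd (p n))).
  assert (Hlim : is_lim_seq t eps) by (apply is_lim_seq_right_inv; apply Hp).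
  pose proof (p3 eps Heps L HL t (fun n => proj1 (proj1 (Hp n))) Hlim) as Hlt.
  apply (Rbar_lt_not_le _ _ Hlt).
  rewrite <- (LimInf_seq_const L). apply LimInf_le. exists O. intros n _.
  destruct (Hp n) as [_ HTp].
  assert (HTne : T (fst (p n)) <> T (snd (p n))).
  { intros Heq. rewrite Heq, (dist_refl d Hd) in HTp. lra. }
  pose proof (HT _ _ HTne). pose proof (HLle _ HTp). unfold t. lra.
Qed.

End FE_contraction.

Theorem mainTheorem11 (X : Type) (x0 : X) (d : X -> X -> R) (T : X -> X)
  (F E : R -> R)
  (Hmetric : is_metric d) (Hcomplete : complete_metric d)
  (HT : forall x y, T x <> T y -> F (d (T x) (T y)) <= E (d x y))
  (p1 : forall s t, 0 < s -> s <= t -> F s <= F t)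
  (p2 : forall t, 0 < t -> E t < F t)
  (p3 : forall eps, 0 < eps -> forall Fplus : R,
          filterlim F (at_right eps) (locally Fplus) ->
          forall t : nat -> R, (forall n, eps < t n) -> is_lim_seq t eps ->
          Rbar_lt (LimInf_seq (fun n => E (t n))) Fplus) :
  CJMP_contraction d T /\ Picard_operator d T.
Proof.
  assert (HCJMP : CJMP_contraction d T)
    by exact (FE_contraction_CJMP d T F E Hmetric HT p1 p2 p3).
  split; [exact HCJMP|].
  exact (CJMP_Picard d T Hmetric HCJMP x0 Hcomplete).
Qed.
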